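(* Every proof in $\mathsf{PA}^\exists$ of a $\Sigma^0_1$ statement $\exists\alpha\mathsf{P}$ (with $\mathsf{P}$ atomic) can be transformed into a proof of $\exists\alpha\mathsf{P}$ in $\mathsf{HA}^\exists+\mathsf{EM}_1^-$.
   Context: The $\exists$-translation $F\mapsto F^\exists$ is: $F^\exists=F$ for atomic $F$; commuting with $\wedge,\vee,\to,\exists$; $(\forall xF)^\exists=\neg\exists x\neg F^\exists$. $\mathsf{PA}^\exists$ is the natural deduction system for arithmetic (over $0,\mathsf{S},+,\cdot,=$) with the intuitionistic rules for $\wedge,\vee,\to,\exists,\bot$, the $\exists$-translated arithmetical axioms, the translated induction rule (from $\Gamma\vdash A(0)$ and $\Gamma\vdash\neg\exists\alpha\neg(A(\alpha)\to A(\mathsf{S}\alpha))$ infer $\Gamma\vdash\neg\exists\alpha\neg A(\alpha)$), and the full excluded middle rule $\mathsf{EM}$ (from $\Gamma,A\vdash C$ and $\Gamma,\neg A\vdash C$ infer $\Gamma\vdash C$, $A,C$ arbitrary). $\mathsf{HA}^\exists$ is intuitionistic arithmetic with the $\exists$-translations of the Heyting arithmetic axioms. $\mathsf{EM}_1^-$ is the rule: for atomic $\mathsf{P}$ and $C$ (with $\mathsf{P}^\bot$ the complementary atomic predicate of $\mathsf{P}$), from $\Gamma,\forall\alpha\mathsf{P}\vdash\exists\beta C$ and $\Gamma,\exists\alpha\mathsf{P}^\bot\vdash\exists\beta C$ infer $\Gamma\vdash\exists\beta C$. *)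

From Stdlib Require Import List.
Import ListNotations.

Inductive term : Type :=
  | Var  : nat -> term
  | Zero : term
  | Succ : term -> term
  | Plus : term -> term -> term
  | Mult : term -> term -> term.

(* Formulas of the exists-language: no universal quantifier.
   Atomic predicates: equality and its complementary predicate (disequality). *)
Inductive form : Type :=
  | Bot : form
  | Eq  : term -> term -> form
  | Neq : term -> term -> form
  | And : form -> form -> form
  | Or  : form -> form -> form
  | Imp : form -> form -> form
  | Ex  : form -> form.  (* binds de Bruijn variable 0 *)

Definition Neg (A : form) : form := Imp A Bot.

Definition atomic (A : form) : Prop :=
  match A with Eq _ _ | Neq _ _ => True | _ => False end.

Definition compl (A : form) : form :=
  match A with
  | Eq t u => Neq t u
  | Neq t u => Eq t u
  | B => B
  end.

Fixpoint rename_term (r : nat -> nat) (t : term) : term :=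
  match t with
  | Var n => Var (r n)
  | Zero => Zero
  | Succ t => Succ (rename_term r t)
  | Plus t u => Plus (rename_term r t) (rename_term r u)
  | Mult t u => Mult (rename_term r t) (rename_term r u)
  end.

Fixpoint subst_term (s : nat -> term) (t : term) : term :=
  match t with
  | Var n => s n
  | Zero => Zero
  | Succ t => Succ (subst_term s t)
  | Plus t u => Plus (subst_term s t) (subst_term s u)
  | Mult t u => Mult (subst_term s t) (subst_term s u)
  end.

Definition up (s : nat -> term) : nat -> term :=
  fun n => match n with
           | O => Var O
           | S m => rename_term S (s m)
           end.

Fixpoint subst (s : nat -> term) (A : form) : form :=
  match A with
  | Bot => Bot
  | Eq t u => Eq (subst_term s t) (subst_term s u)
  | Neq t u => Neq (subst_term s t) (subst_term s u)
  | And A B => And (subst s A) (subst s B)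
  | Or A B => Or (subst s A) (subst s B)
  | Imp A B => Imp (subst s A) (subst s B)
  | Ex A => Ex (subst (up s) A)
  end.

Definition lift (A : form) : form := subst (fun n => Var (S n)) A.

Definition inst (t : term) (A : form) : form :=
  subst (fun n => match n with O => t | S m => Var m end) A.

Definition succ_inst (A : form) : form :=
  subst (fun n => match n with O => Succ (Var O) | S m => Var (S m) end) A.

Fixpoint term_bound (k : nat) (t : term) : Prop :=
  match t with
  | Var n => n < k
  | Zero => True
  | Succ t => term_bound k t
  | Plus t u | Mult t u => term_bound k t /\ term_bound k u
  end.

Fixpoint form_bound (k : nat) (A : form) : Prop :=
  match A with
  | Bot => True
  | Eq t u | Neq t u => term_bound k t /\ term_bound k u
  | And A B | Or A B | Imp A B => form_bound k A /\ form_bound k B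
  | Ex A => form_bound (S k) A
  end.

Definition closed (A : form) : Prop := form_bound 0 A.

(* Arithmetical axioms (all quantifier-free, so their exists-translation is
   themselves; open schemata over arbitrary terms stand for universal closures). *)
Inductive ArithAx : form -> Prop :=
  | ax_refl t : ArithAx (Eq t t)
  | ax_leib t u A : atomic A -> ArithAx (Imp (Eq t u) (Imp (inst t A) (inst u A)))
  | ax_succ0 t : ArithAx (Neg (Eq (Succ t) Zero))
  | ax_succinj t u : ArithAx (Imp (Eq (Succ t) (Succ u)) (Eq t u))
  | ax_plus0 t : ArithAx (Eq (Plus t Zero) t)
  | ax_plusS t u : ArithAx (Eq (Plus t (Succ u)) (Succ (Plus t u)))
  | ax_mult0 t : ArithAx (Eq (Mult t Zero) Zero)
  | ax_multS t u : ArithAx (Eq (Mult t (Succ u)) (Plus (Mult t u) t))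
  | ax_neq1 t u : ArithAx (Imp (Neq t u) (Neg (Eq t u)))
  | ax_neq2 t u : ArithAx (Imp (Neg (Eq t u)) (Neq t u)).

Inductive system : Type := PAex | HAex_EM1.

Inductive deriv (sys : system) : list form -> form -> Prop :=
  | d_hyp G A : In A G -> deriv sys G A
  | d_ax G A : ArithAx A -> deriv sys G A
  | d_andI G A B : deriv sys G A -> deriv sys G B -> deriv sys G (And A B)
  | d_andE1 G A B : deriv sys G (And A B) -> deriv sys G A
  | d_andE2 G A B : deriv sys G (And A B) -> deriv sys G B
  | d_orI1 G A B : deriv sys G A -> deriv sys G (Or A B)
  | d_orI2 G A B : deriv sys G B -> deriv sys G (Or A B)
  | d_orE G A B C : deriv sys G (Or A B) -> deriv sys (A :: G) C ->
      deriv sys (B :: G) C -> deriv sys G C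
  | d_impI G A B : deriv sys (A :: G) B -> deriv sys G (Imp A B)
  | d_impE G A B : deriv sys G (Imp A B) -> deriv sys G A -> deriv sys G B
  | d_exI G A t : deriv sys G (inst t A) -> deriv sys G (Ex A)
  | d_exE G A C : deriv sys G (Ex A) -> deriv sys (A :: map lift G) (lift C) ->
      deriv sys G C
  | d_botE G A : deriv sys G Bot -> deriv sys G A
  (* exists-translated induction rule *)
  | d_ind G A : deriv sys G (inst Zero A) ->
      deriv sys G (Neg (Ex (Neg (Imp A (succ_inst A))))) ->
      deriv sys G (Neg (Ex (Neg A)))
  | d_EM G A C : sys = PAex -> deriv sys (A :: G) C -> deriv sys (Neg A :: G) C ->
      deriv sys G C
  (* EM1^-: only in HA^exists + EM1^-; forall alpha P read as its
     exists-translation ~ exists alpha ~ P *)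
  | d_EM1 G P C : sys = HAex_EM1 -> atomic P -> atomic C ->
      deriv sys (Neg (Ex (Neg P)) :: G) (Ex C) ->
      deriv sys (Ex (compl P) :: G) (Ex C) ->
      deriv sys G (Ex C).

(* Both systems are sound for the standard model N, the excluded-middle rules
   being classically valid; so a PA^exists-proof of the closed formula
   exists alpha P yields a numeral n with P(n) true in N.  Already HA^exists
   proves every true closed atomic formula: it evaluates closed terms to
   numerals and refutes equations between distinct numerals.  Hence it
   proves P(n), and exists alpha P by exists-introduction. *)

From Stdlib Require Import List Arith Lia Classical FunctionalExtensionality.

Definition scons (x : nat) (r : nat -> nat) : nat -> nat :=
  fun n => match n with O => x | S m => r m end.

Fixpoint eval (r : nat -> nat) (t : term) : nat :=
  match t with
  | Var n => r n
  | Zero => 0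
  | Succ t => S (eval r t)
  | Plus t u => eval r t + eval r u
  | Mult t u => eval r t * eval r u
  end.

Fixpoint sat (r : nat -> nat) (A : form) : Prop :=
  match A with
  | Bot => False
  | Eq t u => eval r t = eval r u
  | Neq t u => eval r t <> eval r u
  | And A B => sat r A /\ sat r B
  | Or A B => sat r A \/ sat r B
  | Imp A B => sat r A -> sat r B
  | Ex A => exists x, sat (scons x r) A
  end.

Lemma eval_rename r f t : eval r (rename_term f t) = eval (fun n => r (f n)) t.
Proof. induction t; simpl; congruence. Qed.

Lemma eval_subst r s t : eval r (subst_term s t) = eval (fun n => eval r (s n)) t.
Proof. induction t; simpl; congruence. Qed.

Lemma eval_up x r s :
  (fun n => eval (scons x r) (up s n)) = scons x (fun n => eval r (s n)).
Proof.
  apply functional_extensionality; intros [|n]; simpl; [| rewrite eval_rename]; reflexivity.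
Qed.

Lemma sat_subst A : forall s r, sat r (subst s A) <-> sat (fun n => eval r (s n)) A.
Proof.
  induction A as [| | | A IHA B IHB | A IHA B IHB | A IHA B IHB | A IHA];
    intros s r; simpl; rewrite ?eval_subst; try tauto.
  1-3: rewrite IHA, IHB; tauto.
  setoid_rewrite IHA; setoid_rewrite eval_up; tauto.
Qed.

Lemma sat_subst_pointwise s r r' A :
  (forall n, eval r (s n) = r' n) -> sat r (subst s A) <-> sat r' A.
Proof. intros Hs; rewrite sat_subst, (functional_extensionality _ _ Hs); tauto. Qed.

Lemma sat_lift x r A : sat (scons x r) (lift A) <-> sat r A.
Proof. now apply sat_subst_pointwise. Qed.

Lemma sat_inst r t A : sat r (inst t A) <-> sat (scons (eval r t) r) A.
Proof. apply sat_subst_pointwise; now intros [|n]. Qed.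

Lemma sat_succ_inst x r A : sat (scons x r) (succ_inst A) <-> sat (scons (S x) r) A.
Proof. apply sat_subst_pointwise; now intros [|n]. Qed.

Lemma sat_compl r A : atomic A -> sat r (compl A) <-> ~ sat r A.
Proof.
  destruct A; simpl; try contradiction; intros _; [tauto |].
  destruct (Nat.eq_dec (eval r t) (eval r t0)); tauto.
Qed.

Lemma sat_ArithAx r A : ArithAx A -> sat r A.
Proof.
  destruct 1; simpl; try lia.
  intros Heq; rewrite !sat_inst, Heq; tauto.
Qed.

Lemma sat_induction_rule r A :
  sat r (inst Zero A) -> sat r (Neg (Ex (Neg (Imp A (succ_inst A))))) ->
  sat r (Neg (Ex (Neg A))).
Proof.
  rewrite sat_inst; simpl; intros Hzero Hstep [x Hx]; apply Hx; clear Hx.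
  assert (Hsucc : forall y, sat (scons y r) A -> sat (scons (S y) r) A).
  { intros y Hy; apply sat_succ_inst, NNPP; intros Hn; apply Hstep; eauto. }
  induction x; auto.
Qed.

Theorem deriv_sound sys G A :
  deriv sys G A -> forall r, Forall (sat r) G -> sat r A.
Proof.
  induction 1 as [G A HA | G A HA | G A B _ IH1 _ IH2 | G A B _ IH | G A B _ IH
                 | G A B _ IH | G A B _ IH | G A B C _ IH _ IH1 _ IH2
                 | G A B _ IH | G A B _ IH1 _ IH2 | G A t _ IH | G A C _ IH1 _ IH2
                 | G A _ IH | G A _ IH1 _ IH2 | G A C _ _ IH1 _ IH2
                 | G P C _ HP _ _ IH1 _ IH2];
    intros r HG; simpl in *.
  - exact (proj1 (Forall_forall _ _) HG A HA).
  - now apply sat_ArithAx.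
  - auto.
  - apply IH, HG.
  - apply IH, HG.
  - auto.
  - auto.
  - destruct (IH r HG); [apply IH1 | apply IH2]; auto.
  - intros HA; apply IH; auto.
  - apply (IH1 r HG), IH2, HG.
  - exists (eval r t); apply sat_inst, IH, HG.
  - destruct (IH1 r HG) as [x Hx].
    apply (sat_lift x), IH2; constructor; [exact Hx |].
    apply Forall_map; eapply Forall_impl; [| exact HG]; intros B; apply sat_lift.
  - destruct (IH r HG).
  - exact (sat_induction_rule r A (IH1 r HG) (IH2 r HG)).
  - destruct (classic (sat r A)); [apply IH1 | apply IH2]; auto.
  - destruct (classic (exists x, sat (scons x r) (compl P))) as [Hc | Hc];
      [apply IH2 | apply IH1]; auto.
    constructor; auto; intros [x Hx]; apply Hc; exists x; apply sat_compl; auto.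
Qed.

Definition sg (t : term) : nat -> term :=
  fun n => match n with O => t | S m => Var m end.

Lemma subst_term_sg_rename t v : subst_term (sg t) (rename_term S v) = v.
Proof. induction v; simpl; congruence. Qed.

Lemma term_bound_rename k m f t :
  (forall n, n < k -> f n < m) -> term_bound k t -> term_bound m (rename_term f t).
Proof. intros Hf; induction t; simpl; intuition. Qed.

Lemma term_bound_subst k m s t :
  (forall n, n < k -> term_bound m (s n)) -> term_bound k t -> term_bound m (subst_term s t).
Proof. intros Hs; induction t; simpl; intuition. Qed.

Lemma form_bound_subst A : forall k m s,
  (forall n, n < k -> term_bound m (s n)) -> form_bound k A -> form_bound m (subst s A).
Proof.
  induction A; intros k m s Hs; simpl; try solve [intuition eauto using term_bound_subst].
  apply IHA; intros [|n] Hn; simpl; [lia |].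
  apply (term_bound_rename m); [lia | apply Hs; lia].
Qed.

Lemma atomic_inst t A : atomic A -> atomic (inst t A).
Proof. now destruct A. Qed.

Fixpoint numeral (n : nat) : term :=
  match n with O => Zero | S k => Succ (numeral k) end.

Lemma eval_numeral r n : eval r (numeral n) = n.
Proof. induction n; simpl; auto. Qed.

Lemma term_bound_numeral k n : term_bound k (numeral n).
Proof. induction n; simpl; auto. Qed.

Lemma closed_inst t A : form_bound 1 A -> term_bound 0 t -> closed (inst t A).
Proof.
  intros HA Ht; apply (form_bound_subst A 1); [| exact HA].
  intros [|n] Hn; [exact Ht | lia].
Qed.

Section Completeness.

Variable sys : system.

Lemma deriv_eq_refl G t : deriv sys G (Eq t t).
Proof. apply d_ax, ax_refl. Qed.

Lemma deriv_eq_rewrite G t u a b :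
  deriv sys G (Eq t u) ->
  deriv sys G (Eq (subst_term (sg t) a) (subst_term (sg t) b)) ->
  deriv sys G (Eq (subst_term (sg u) a) (subst_term (sg u) b)).
Proof.
  intros Htu Ht.
  exact (d_impE _ _ _ _ (d_impE _ _ _ _ (d_ax _ _ _ (ax_leib t u (Eq a b) I)) Htu) Ht).
Qed.

Lemma deriv_eq_sym G t u : deriv sys G (Eq t u) -> deriv sys G (Eq u t).
Proof.
  intros Htu.
  pose proof (deriv_eq_rewrite G t u (Var 0) (rename_term S t) Htu) as H.
  simpl in H; rewrite !subst_term_sg_rename in H.
  apply H, deriv_eq_refl.
Qed.

Lemma deriv_eq_congr G t u c :
  deriv sys G (Eq t u) -> deriv sys G (Eq (subst_term (sg t) c) (subst_term (sg u) c)).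
Proof.
  intros Htu.
  pose proof (deriv_eq_rewrite G t u (rename_term S (subst_term (sg t) c)) c Htu) as H.
  rewrite !subst_term_sg_rename in H.
  apply H, deriv_eq_refl.
Qed.
Lemma deriv_eq_trans G t u v :
  deriv sys G (Eq t u) -> deriv sys G (Eq u v) -> deriv sys G (Eq t v).
Proof.
  intros Htu Huv.
  pose proof (deriv_eq_rewrite G u v (rename_term S t) (Var 0) Huv) as H.
  simpl in H; rewrite !subst_term_sg_rename in H.
  apply H, Htu.
Qed.

Lemma deriv_eq_succ G t u : deriv sys G (Eq t u) -> deriv sys G (Eq (Succ t) (Succ u)).
Proof. exact (deriv_eq_congr G t u (Succ (Var 0))). Qed.

Lemma deriv_eq_plus G t t' u u' :
  deriv sys G (Eq t t') -> deriv sys G (Eq u u') ->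
  deriv sys G (Eq (Plus t u) (Plus t' u')).
Proof.
  intros Ht Hu.
  pose proof (deriv_eq_congr G t t' (Plus (Var 0) (rename_term S u)) Ht) as H1.
  pose proof (deriv_eq_congr G u u' (Plus (rename_term S t') (Var 0)) Hu) as H2.
  simpl in H1, H2; rewrite !subst_term_sg_rename in H1, H2.
  exact (deriv_eq_trans _ _ _ _ H1 H2).
Qed.

Lemma deriv_eq_mult G t t' u u' :
  deriv sys G (Eq t t') -> deriv sys G (Eq u u') ->
  deriv sys G (Eq (Mult t u) (Mult t' u')).
Proof.
  intros Ht Hu.
  pose proof (deriv_eq_congr G t t' (Mult (Var 0) (rename_term S u)) Ht) as H1.
  pose proof (deriv_eq_congr G u u' (Mult (rename_term S t') (Var 0)) Hu) as H2.
  simpl in H1, H2; rewrite !subst_term_sg_rename in H1, H2.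
  exact (deriv_eq_trans _ _ _ _ H1 H2).
Qed.

Lemma deriv_plus_numeral G a b :
  deriv sys G (Eq (Plus (numeral a) (numeral b)) (numeral (a + b))).
Proof.
  induction b as [|b IHb].
  - rewrite Nat.add_0_r; apply d_ax, ax_plus0.
  - rewrite Nat.add_succ_r.
    eapply deriv_eq_trans; [apply d_ax, ax_plusS | apply deriv_eq_succ, IHb].
Qed.

Lemma deriv_mult_numeral G a b :
  deriv sys G (Eq (Mult (numeral a) (numeral b)) (numeral (a * b))).
Proof.
  induction b as [|b IHb].
  - rewrite Nat.mul_0_r; apply d_ax, ax_mult0.
  - rewrite Nat.mul_succ_r.
    eapply deriv_eq_trans; [apply d_ax, ax_multS |].
    eapply deriv_eq_trans; [apply deriv_eq_plus; [exact IHb | apply deriv_eq_refl] |].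
    apply deriv_plus_numeral.
Qed.

Lemma deriv_closed_term_numeral G r t :
  term_bound 0 t -> deriv sys G (Eq t (numeral (eval r t))).
Proof.
  induction t as [n | | t IHt | t IHt u IHu | t IHt u IHu]; simpl; intros Hb.
  - lia.
  - apply deriv_eq_refl.
  - apply deriv_eq_succ, IHt, Hb.
  - eapply deriv_eq_trans; [apply deriv_eq_plus; [apply IHt | apply IHu]; apply Hb |].
    apply deriv_plus_numeral.
  - eapply deriv_eq_trans; [apply deriv_eq_mult; [apply IHt | apply IHu]; apply Hb |].
    apply deriv_mult_numeral.
Qed.

Lemma deriv_numeral_neq a : forall b G,
  a <> b -> deriv sys G (Neg (Eq (numeral a) (numeral b))).
Proof.
  induction a as [|a IHa]; intros [|b] G Hab; simpl.
  - congruence.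
  - apply d_impI; eapply d_impE; [apply d_ax, ax_succ0 |].
    apply deriv_eq_sym, d_hyp; left; reflexivity.
  - apply d_ax, ax_succ0.
  - apply d_impI; eapply d_impE; [apply (IHa b); lia |].
    eapply d_impE; [apply d_ax, ax_succinj | apply d_hyp; left; reflexivity].
Qed.

Theorem deriv_closed_atomic_complete G r A :
  atomic A -> closed A -> sat r A -> deriv sys G A.
Proof.
  destruct A as [| t u | t u | | | |]; simpl; try contradiction;
    intros _ [Ht Hu] Htrue.
  - eapply deriv_eq_trans; [apply (deriv_closed_term_numeral G r t Ht) |].
    rewrite Htrue; apply deriv_eq_sym, deriv_closed_term_numeral, Hu.
  - eapply d_impE; [apply d_ax, ax_neq2 |].
    apply d_impI; eapply d_impE; [apply (deriv_numeral_neq _ _ _ Htrue) |].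
    eapply deriv_eq_trans; [apply deriv_eq_sym, deriv_closed_term_numeral, Ht |].
    eapply deriv_eq_trans; [apply d_hyp; left; reflexivity |].
    apply deriv_closed_term_numeral, Hu.
Qed.

End Completeness.

Theorem mainTheorem11 (P : form) :
  atomic P -> closed (Ex P) ->
  deriv PAex nil (Ex P) -> deriv HAex_EM1 nil (Ex P).
Proof.
  intros HP Hc Hd.
  set (r := fun _ : nat => 0).
  destruct (deriv_sound _ _ _ Hd r (Forall_nil _)) as [n Hn].
  apply d_exI with (t := numeral n).
  apply (deriv_closed_atomic_complete _ _ r).
  - apply atomic_inst, HP.
  - apply closed_inst; [exact Hc | apply term_bound_numeral].
  - apply sat_inst; rewrite eval_numeral; exact Hn.
Qed.
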